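(* There is no quadratical quasigroup $(Q,\cdot)$ containing two distinct elements $a,b$ such that $Q=\{aba\}\cup H1\cup H2\cup H3\cup H4\cup H5\cup H6$ with the six sets $H1,\dots,H6$ pairwise disjoint (equivalently, with $|Q|=25$).
   Context: A quadratical quasigroup is a quasigroup $(Q,\cdot)$ satisfying $xy\cdot x=zx\cdot yz$ for all $x,y,z\in Q$; equivalently, a groupoid satisfying $x\cdot x=x$, $yx\cdot xy=x$ and $xy\cdot zw=xz\cdot yw$ for all $x,y,z,w$. For distinct $a,b\in Q$ write $aba=ab\cdot a$ and define elements $[t,k]$ (written $tk$), $t\geq 1$, $k\in\{1,2,3,4\}$, by $11=a$, $12=ab$, $13=ba$, $14=b$, and for $n\geq 2$: $n1=(n-1)1\cdot(n-1)2$, $n2=(n-1)2\cdot(n-1)4$, $n3=(n-1)3\cdot(n-1)1$, $n4=(n-1)4\cdot(n-1)3$. Put $Ht=\{t1,t2,t3,t4\}$. *)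

From Stdlib Require Import Arith.

Definition is_quasigroup {T : Type} (mul : T -> T -> T) : Prop :=
  (forall a b : T, exists! x : T, mul a x = b) /\
  (forall a b : T, exists! y : T, mul y a = b).

Definition is_quadratical_quasigroup {T : Type} (mul : T -> T -> T) : Prop :=
  is_quasigroup mul /\
  (forall x y z : T, mul (mul x y) x = mul (mul z x) (mul y z)).

Definition aba {T : Type} (mul : T -> T -> T) (a b : T) : T := mul (mul a b) a.

(* Hrow mul a b m = ([m+1,1], [m+1,2], [m+1,3], [m+1,4]) *)
Fixpoint Hrow {T : Type} (mul : T -> T -> T) (a b : T) (m : nat) : T * T * T * T :=
  match m with
  | O => (a, mul a b, mul b a, b)
  | S m' =>
      match Hrow mul a b m' with
      | (x1, x2, x3, x4) => (mul x1 x2, mul x2 x4, mul x3 x1, mul x4 x3)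
      end
  end.

(* the element [t,k] = tk, for t >= 1 and k in {1,2,3,4} *)
Definition elt {T : Type} (mul : T -> T -> T) (a b : T) (t k : nat) : T :=
  match Hrow mul a b (t - 1) with
  | (x1, x2, x3, x4) =>
      match k with 1 => x1 | 2 => x2 | 3 => x3 | _ => x4 end
  end.

Definition inH {T : Type} (mul : T -> T -> T) (a b : T) (t : nat) (x : T) : Prop :=
  exists k, 1 <= k <= 4 /\ x = elt mul a b t k.

From Stdlib Require Import Arith.
From HB Require Import structures.
From mathcomp Require Import all_boot all_algebra ring zify.
From mathcomp Require Import boolp complex.

Set Implicit Arguments.
Unset Strict Implicit.
Unset Printing Implicit Defensive.

Import GRing.Theory.
Local Open Scope ring_scope.

(* Take o = aba as origin.  By the Bruck-Toyoda construction x + y = (x/o)(o\y),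
   the medial idempotent quasigroup Q becomes an abelian group in which
   xy = R x + L y for the commuting automorphisms R = (. o) and L = (o .);
   idempotence gives R + L = 1 and (ox)(xo) = x gives 2RL = 1.  Hence i = R - L
   squares to -1, Q is a 2-torsion-free Z[i]-module, 2(xy) = (1+i)x + (1-i)y,
   b = -a, and the row Ht consists of the unit multiples of (1+i)^(t-1) a.
   Suppose Q = {o} u H1 u ... u H6 with disjoint rows and put pi = 1 + i.
   Cancelling powers of pi in the row containing pi^6 a gives pi^6 a = w a for a
   unit w, so z^24 a = a whenever z a <> 0 and the annihilator of a is prime.
   As pi^6 = -8i, it contains (2+i)(2+3i), 9, (2-i)(2-3i) or 7.  Each of 2 +- i,
   2 +- 3i and 3 divides some pi^e - w with 1 <= e <= 5, which would merge two
   rows, and 7 is impossible because (2+i)^24 = -1 mod 7. *)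

Section SixLayers.
Variables (G : comNzRingType) (i : G).
Hypothesis sqr_i : i ^+ 2 = -1.
Local Notation π := (1 + i).

Lemma unit_cases k : [\/ i ^+ k = 1, i ^+ k = i, i ^+ k = -1 | i ^+ k = - i].
Proof.
elim: k => [|k IHk]; first by constructor 1.
by rewrite exprS; case: IHk => ->; [constructor 2|constructor 3|constructor 4|constructor 1];
  ring: sqr_i.
Qed.

Lemma unit_exp4 k : (i ^+ k) ^+ 4 = 1.
Proof.
by rewrite -exprM mulnC exprM (_ : i ^+ 4 = 1) ?expr1n //; ring: sqr_i.
Qed.

Variables (M : lmodType G) (a : M).
Hypothesis double_inj : injective (fun x : M => x *+ 2).
Hypothesis layers_cover :
  forall x : M, x = 0 \/ exists k s, (s <= 5)%N /\ x = (i ^+ k * π ^+ s) *: a.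
Hypothesis layers_disjoint :
  forall k e, (0 < e <= 5)%N -> π ^+ e *: a <> i ^+ k *: a.

Lemma scale_pi_inj : injective (fun x : M => π *: x).
Proof.
move=> x y /(congr1 (fun v => (1 - i) *: v)) /=.
rewrite !scalerA (_ : (1 - i) * π = 2%:R); last by ring: sqr_i.
by rewrite !scaler_nat => /double_inj.
Qed.

Lemma scale_pi_exp_inj s : injective (fun x : M => π ^+ s *: x).
Proof.
elim: s => [|s IHs] x y /=; first by rewrite !scale1r.
by rewrite exprS -!scalerA => /scale_pi_inj/IHs.
Qed.

Lemma generator_neq0 : a <> 0.
Proof. by move=> a0; apply: (@layers_disjoint 0 1) => //; rewrite a0 !scaler0. Qed.

Lemma pi6_unit : exists k, π ^+ 6 *: a = i ^+ k *: a.
Proof.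
case: (layers_cover (π ^+ 6 *: a)) => [pi6a0 | [k [s [le_s5 pi6a]]]].
  by case: generator_neq0; apply: (scale_pi_exp_inj (s := 6)); rewrite /= pi6a0 scaler0.
case: s le_s5 pi6a => [|s] le_s5 pi6a; first by exists k; rewrite pi6a mulr1.
exfalso; move: pi6a.
have -> : π ^+ 6 = π ^+ s.+1 * π ^+ (5 - s) by rewrite -exprD; congr (_ ^+ _); lia.
rewrite [i ^+ k * _]mulrC -!scalerA => /(scale_pi_exp_inj (s := s.+1)) /=.
by apply: (@layers_disjoint k (5 - s)); lia.
Qed.

Lemma scale_exp_congr (z w : G) (x : M) n :
  z *: x = w *: x -> z ^+ n *: x = w ^+ n *: x.
Proof.
move=> zw; elim: n => [|n IHn]; first by rewrite !expr0.
by rewrite exprSr -scalerA zw scalerA mulrC -scalerA IHn scalerA -exprS.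
Qed.

Lemma exp24_fixes z : z *: a = 0 \/ z ^+ 24 *: a = a.
Proof.
case: (layers_cover (z *: a)) => [|[k [s [_ za]]]]; [by left | right].
have [k0 pi6] := pi6_unit.
have pi24 : π ^+ 24 *: a = 1 *: a.
  by rewrite (exprM π 6 4) (scale_exp_congr 4 pi6) unit_exp4.
rewrite (scale_exp_congr 24 za) exprMn (exprM _ 4 6) unit_exp4 expr1n mul1r.
by rewrite -exprM mulnC exprM (scale_exp_congr s pi24) expr1n scale1r.
Qed.

Lemma annihilator_prime z w : (z * w) *: a = 0 -> z *: a = 0 \/ w *: a = 0.
Proof.
move=> zw0; case: (exp24_fixes z) => [|z24]; [by left | right].
rewrite -z24 scalerA (_ : w * z ^+ 24 = z ^+ 23 * (z * w)); last by ring.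
by rewrite -scalerA zw0 scaler0.
Qed.

Lemma layer_gap_divisor_neq0 z c e k :
  (0 < e <= 5)%N -> π ^+ e - i ^+ k = c * z -> z *: a <> 0.
Proof.
move=> e_5 gapE za0; apply: (@layers_disjoint k e e_5); apply/eqP.
by rewrite -subr_eq0 -scalerBl gapE -scalerA za0 scaler0.
Qed.

(* (2 + i)^24 = -1 mod 7, whereas exp24_fixes forces (2 + i)^24 a = a. *)
Lemma seven_neq0 : 7 *: a <> 0.
Proof.
move=> seven_a; have mul7 c : (c * 7) *: a = 0 by rewrite -scalerA seven_a scaler0.
have [|fix24] := exp24_fixes (2 + i).
  by apply: (layer_gap_divisor_neq0 (c := 1) (e := 1) (k := 2)) => //; ring: sqr_i.
have pow4 : (2 + i) ^+ 4 *: a = (3 * i) *: a.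
  apply/eqP; rewrite -subr_eq0 -scalerBl.
  by rewrite (_ : _ - _ = (-1 + 3 * i) * 7) ?mul7 //; ring: sqr_i.
have := scale_exp_congr 6 pow4; rewrite -exprM fix24.
rewrite (_ : (3 * i) ^+ 6 = -1 + (- 104) * 7); last by ring: sqr_i.
rewrite scalerDl mul7 addr0 scaleN1r => a_opp.
by apply: generator_neq0; apply: double_inj; rewrite /= mul0rn mulr2n {1}a_opp addNr.
Qed.

Lemma six_layers_contradiction : False.
Proof.
have [k0 pi6] := pi6_unit.
have pi6_factor z w : π ^+ 6 - i ^+ k0 = z * w -> z *: a = 0 \/ w *: a = 0.
  by move=> pi6E; apply: annihilator_prime; rewrite -pi6E scalerBl pi6 subrr.
case: (unit_cases k0) => ik0.
- have [] : (2 + i) *: a = 0 \/ (- (2 + 3 * i)) *: a = 0.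
    by apply: pi6_factor; rewrite ik0; ring: sqr_i.
  + by apply: (layer_gap_divisor_neq0 (c := 1) (e := 1) (k := 2)) => //; ring: sqr_i.
  + by apply: (layer_gap_divisor_neq0 (c := - i) (e := 3) (k := 0)) => //; ring: sqr_i.
- have [] : 3 *: a = 0 \/ (3 * - i) *: a = 0.
    by apply: pi6_factor; rewrite ik0; ring: sqr_i.
  + by apply: (layer_gap_divisor_neq0 (c := i) (e := 2) (k := 3)) => //; ring: sqr_i.
  + by apply: (layer_gap_divisor_neq0 (c := -1) (e := 2) (k := 3)) => //; ring: sqr_i.
- have [] : (2 - i) *: a = 0 \/ (2 - 3 * i) *: a = 0.
    by apply: pi6_factor; rewrite ik0; ring: sqr_i.
  + by apply: (layer_gap_divisor_neq0 (c := i) (e := 2) (k := 2)) => //; ring: sqr_i.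
  + by apply: (layer_gap_divisor_neq0 (c := -1) (e := 3) (k := 3)) => //; ring: sqr_i.
- have [] : 7 *: a = 0 \/ (- i) *: a = 0.
    by apply: pi6_factor; rewrite ik0; ring: sqr_i.
  + exact: seven_neq0.
  + by apply: (layer_gap_divisor_neq0 (c := -1) (e := 1) (k := 0)) => //; ring: sqr_i.
Qed.

End SixLayers.

(* [complex R] is a ring only for a field R, so the Gaussian integers get their
   ring structure on an alias. *)
Definition gaussint : Type := int[i].
HB.instance Definition _ := GRing.Zmodule.on gaussint.

Fact gaussint_mul1 : left_id (Complex 1 0 : gaussint) (@ComplexField.mulc int).
Proof. by case=> a b /=; rewrite !mul1r !mul0r subr0 addr0. Qed.

Fact gaussint_mulDl : left_distributive (@ComplexField.mulc int) (@GRing.add gaussint).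
Proof. by case=> [a b] [c d] [e f] /=; congr (Complex _ _); ring. Qed.

Fact gaussint_one_neq0 : (Complex 1 0 : gaussint) != 0.
Proof. by []. Qed.

HB.instance Definition _ := GRing.Zmodule_isComNzRing.Build gaussint
  (@ComplexField.mulcA int) (@ComplexField.mulcC int)
  gaussint_mul1 gaussint_mulDl gaussint_one_neq0.

Definition gi : gaussint := Complex 0 1.

Lemma sqr_gi : gi ^+ 2 = -1.
Proof. by []. Qed.

Local Notation π := (1 + gi).

Section QuadraticalQuasigroup.
Variables (T : Type) (m : T -> T -> T).
Hypothesis ldiv_unique : forall x y, exists! z, m x z = y.
Hypothesis rdiv_unique : forall x y, exists! z, m z x = y.
Hypothesis quadratical : forall x y z, m (m x y) x = m (m z x) (m y z).

Lemma mulqI x : injective (m x).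
Proof.
move=> y z myz; have [u [_ uniq_u]] := ldiv_unique x (m x y).
by rewrite -(uniq_u y) // (uniq_u z).
Qed.

Lemma mulIq x : injective (m^~ x).
Proof.
move=> y z myz; have [u [_ uniq_u]] := rdiv_unique x (m y x).
by rewrite -(uniq_u y) // (uniq_u z).
Qed.

Lemma mulqq x : m x x = x.
Proof. by apply: (@mulqI (m x x)); rewrite -quadratical. Qed.

Lemma mulq_swapK x y : m (m y x) (m x y) = x.
Proof. by rewrite -quadratical !mulqq. Qed.

Lemma mulq_flex_sym x y : m (m x y) x = m (m y x) y.
Proof. by rewrite (quadratical x y y) mulqq. Qed.

Lemma mulq_flex x y : m (m x y) x = m x (m y x).
Proof. by rewrite (quadratical x y x) mulqq. Qed.

Lemma mulq_exchange w q x z : m w q = m x z -> m q x = m z w.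
Proof.
move=> wq_xz; set p := m w q; set A := m q w; set B := m z x.
have pA : m p A = q by rewrite mulq_swapK.
have Ap : m A p = w by rewrite mulq_swapK.
have pB : m p B = z by rewrite /p wq_xz mulq_swapK.
have Bp : m B p = x by rewrite /p wq_xz mulq_swapK.
by rewrite -pA -Ap -pB -Bp -!quadratical mulq_flex_sym.
Qed.

Lemma mulq_medial x y z w : m (m x y) (m z w) = m (m x z) (m y w).
Proof.
have [b [bx _]] := rdiv_unique x (m z w).
have [q [wq _]] := ldiv_unique w (m x z).
have qb : q = b by apply: (@mulIq x); rewrite bx; apply: mulq_exchange.
by rewrite -bx -wq -!quadratical qb mulq_flex_sym.
Qed.

Section AffineGroup.
Variable o : T.

Definition qgroup : Type := T.
HB.instance Definition _ := gen_eqMixin qgroup.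
HB.instance Definition _ := gen_choiceMixin qgroup.

Lemma ex_ldiv (x y : qgroup) : exists z : qgroup, m x z = y.
Proof. by have [z []] := ldiv_unique x y; exists z. Qed.

Lemma ex_rdiv (x y : qgroup) : exists z : qgroup, m z x = y.
Proof. by have [z []] := rdiv_unique x y; exists z. Qed.

Definition rmulo (x : qgroup) : qgroup := m x o.
Definition lmulo (x : qgroup) : qgroup := m o x.
Definition rmulo_inv (x : qgroup) : qgroup := sval (cid (ex_rdiv o x)).
Definition lmulo_inv (x : qgroup) : qgroup := sval (cid (ex_ldiv o x)).

Lemma rmulo_invK : cancel rmulo_inv rmulo.
Proof. by move=> x; rewrite /rmulo (svalP (cid (ex_rdiv o x))). Qed.

Lemma lmulo_invK : cancel lmulo_inv lmulo.
Proof. by move=> x; rewrite /lmulo (svalP (cid (ex_ldiv o x))). Qed.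

Lemma rmuloK : cancel rmulo rmulo_inv.
Proof. by move=> x; apply: (@mulIq o); rewrite -/(rmulo _) rmulo_invK. Qed.

Lemma lmuloK : cancel lmulo lmulo_inv.
Proof. by move=> x; apply: (@mulqI o); rewrite -/(lmulo _) lmulo_invK. Qed.

Lemma rmulo_inj : injective rmulo. Proof. exact: can_inj rmuloK. Qed.
Lemma lmulo_inj : injective lmulo. Proof. exact: can_inj lmuloK. Qed.

Lemma rmuloM x y : rmulo (m x y) = m (rmulo x) (rmulo y).
Proof. by rewrite /rmulo -{1}(mulqq o) mulq_medial. Qed.

Lemma lmuloM x y : lmulo (m x y) = m (lmulo x) (lmulo y).
Proof. by rewrite /lmulo -{1}(mulqq o) mulq_medial. Qed.

Lemma rmulo_invM x y : rmulo_inv (m x y) = m (rmulo_inv x) (rmulo_inv y).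
Proof. by apply: rmulo_inj; rewrite rmuloM !rmulo_invK. Qed.

Lemma lmulo_invM x y : lmulo_inv (m x y) = m (lmulo_inv x) (lmulo_inv y).
Proof. by apply: lmulo_inj; rewrite lmuloM !lmulo_invK. Qed.

Lemma rmulo_lmulo x : rmulo (lmulo x) = lmulo (rmulo x).
Proof. by rewrite /rmulo /lmulo -{2}(mulqq o) mulq_medial mulqq. Qed.

Lemma rmulo_inv_lmulo x : rmulo_inv (lmulo x) = lmulo (rmulo_inv x).
Proof. by apply: rmulo_inj; rewrite rmulo_lmulo !rmulo_invK. Qed.

Lemma lmulo_inv_rmulo x : lmulo_inv (rmulo x) = rmulo (lmulo_inv x).
Proof. by apply: lmulo_inj; rewrite -rmulo_lmulo !lmulo_invK. Qed.

Lemma rmulo_inv_lmulo_inv x : rmulo_inv (lmulo_inv x) = lmulo_inv (rmulo_inv x).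
Proof. by apply: lmulo_inj; rewrite -rmulo_inv_lmulo !lmulo_invK. Qed.

Lemma rmulo_inv_o : rmulo_inv o = o.
Proof. by apply: rmulo_inj; rewrite rmulo_invK /rmulo mulqq. Qed.

Definition addq (x y : qgroup) : qgroup := m (rmulo_inv x) (lmulo_inv y).
Definition oppq (x : qgroup) : qgroup := rmulo (sval (cid (ex_rdiv (lmulo_inv x) o))).

Lemma addqA : associative addq.
Proof.
move=> x y z; rewrite /addq rmulo_invM lmulo_invM -{2}[lmulo_inv z]lmulo_invK.
by rewrite /lmulo mulq_medial -/(rmulo _) rmulo_invK rmulo_inv_lmulo_inv.
Qed.

Lemma addqC : commutative addq.
Proof.
move=> x y; rewrite /addq -[x]rmulo_invK -[y]lmulo_invK rmulo_inv_lmulo lmulo_inv_rmulo.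
by rewrite rmuloK lmuloK /rmulo /lmulo mulq_medial -/(rmulo _) -/(lmulo _) rmulo_invK lmulo_invK.
Qed.

Lemma add0q : left_id o addq.
Proof. by move=> x; rewrite /addq rmulo_inv_o -/(lmulo _) lmulo_invK. Qed.

Lemma addNq : left_inverse o oppq addq.
Proof. by move=> x; rewrite /addq /oppq rmuloK (svalP (cid (ex_rdiv (lmulo_inv x) o))). Qed.

HB.instance Definition _ := GRing.isZmodule.Build qgroup addqA addqC add0q addNq.

Lemma mulq_addE x y : m x y = rmulo x + lmulo y.
Proof. by rewrite [RHS]/(addq _ _) rmuloK lmuloK. Qed.

Lemma rmuloD x y : rmulo (x + y) = rmulo x + rmulo y.
Proof.
rewrite [x + y]/(addq _ _) [RHS]/(addq _ _) rmuloM rmulo_invK rmuloK.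
by rewrite lmulo_inv_rmulo.
Qed.

Lemma lmuloD x y : lmulo (x + y) = lmulo x + lmulo y.
Proof.
rewrite [x + y]/(addq _ _) [RHS]/(addq _ _) lmuloM lmulo_invK lmuloK.
by rewrite rmulo_inv_lmulo.
Qed.

Lemma rmulo0 : rmulo 0 = 0. Proof. exact: mulqq. Qed.
Lemma lmulo0 : lmulo 0 = 0. Proof. exact: mulqq. Qed.

HB.instance Definition _ := GRing.isNmodMorphism.Build qgroup qgroup rmulo (rmulo0, rmuloD).
HB.instance Definition _ := GRing.isNmodMorphism.Build qgroup qgroup lmulo (lmulo0, lmuloD).

Lemma rmulo_add_lmulo x : rmulo x + lmulo x = x.
Proof. by rewrite -mulq_addE mulqq. Qed.

Lemma rmulo_lmulo_double x : rmulo (lmulo x) *+ 2 = x.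
Proof. by rewrite mulr2n {2}rmulo_lmulo -mulq_addE mulq_swapK. Qed.

Lemma double_inj : injective (fun x : qgroup => x *+ 2).
Proof.
move=> x y /= xy2; rewrite -[x]rmulo_lmulo_double -[y]rmulo_lmulo_double.
by rewrite -!raddfMn /= xy2.
Qed.

Definition rotq (x : qgroup) : qgroup := rmulo x - lmulo x.
Arguments rotq : simpl never.

Lemma rotqB : {morph rotq : x y / x - y}.
Proof. by move=> x y; rewrite /rotq (raddfB rmulo) (raddfB lmulo) !opprD !opprK addrACA. Qed.

HB.instance Definition _ := GRing.isZmodMorphism.Build qgroup qgroup rotq rotqB.

Lemma rotqK x : rotq (rotq x) = - x.
Proof.
have RRLL : rmulo (rmulo x) + lmulo (lmulo x) = 0.
  apply: (@addIr _ x); rewrite add0r -[X in _ + X = _](rmulo_lmulo_double x).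
  rewrite mulr2n {2}rmulo_lmulo addrACA [lmulo (lmulo x) + _]addrC -!raddfD.
  by rewrite !rmulo_add_lmulo.
rewrite /rotq (raddfB rmulo) (raddfB lmulo) /= -rmulo_lmulo.
by rewrite opprB addrACA RRLL add0r -opprD -mulr2n rmulo_lmulo_double.
Qed.

Lemma rotqD x y : rotq (x + y) = rotq x + rotq y. Proof. exact: raddfD. Qed.
Lemma rotqMz x n : rotq (x *~ n) = rotq x *~ n. Proof. exact: raddfMz. Qed.

Definition scaleq (z : gaussint) (x : qgroup) : qgroup := x *~ Re z + rotq x *~ Im z.

Lemma scaleqA z w x : scaleq z (scaleq w x) = scaleq (z * w) x.
Proof.
case: z w => [zr zi] [wr wi]; rewrite /scaleq /= rotqD !rotqMz rotqK.
rewrite !(mulrzDl _ (_ *~ wr)) !mulNrz -!mulrzA [rotq x *~ _ + _]addrC addrACA.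
by rewrite -mulrzBr -mulrzDr; congr (_ *~ _ + _ *~ _); ring.
Qed.

Lemma scaleq1 : left_id 1 scaleq.
Proof. by move=> x; rewrite /scaleq /= mulr1z mulr0z addr0. Qed.

Lemma scaleqDr : right_distributive scaleq +%R.
Proof. by move=> z x y; rewrite /scaleq rotqD !mulrzDl addrACA. Qed.

Lemma scaleqDl x : {morph scaleq^~ x : z w / z + w}.
Proof. by case=> [zr zi] [wr wi]; rewrite /scaleq /= !mulrzDr addrACA. Qed.

HB.instance Definition _ :=
  GRing.Zmodule_isLmodule.Build gaussint qgroup scaleqA scaleq1 scaleqDr scaleqDl.

Lemma scale_1pgi x : (1 + gi) *: x = rmulo x *+ 2.
Proof.
rewrite [LHS]/(scaleq _ _) /= mulr1z mulr1z /rotq -{1}[x]rmulo_add_lmulo.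
by rewrite addrACA subrr addr0.
Qed.

Lemma scale_1mgi x : (1 - gi) *: x = lmulo x *+ 2.
Proof.
rewrite [LHS]/(scaleq _ _) /= mulr1z mulrN1z /rotq -{1}[x]rmulo_add_lmulo.
by rewrite opprB [rmulo x + _]addrC addrACA subrr addr0.
Qed.

Lemma mulq_affine (x y : qgroup) : (m x y : qgroup) *+ 2 = (1 + gi) *: x + (1 - gi) *: y.
Proof. by rewrite scale_1pgi scale_1mgi mulq_addE mulrnDl. Qed.

Lemma mulq_eq0 (x y : qgroup) : m x y = 0 :> qgroup -> x = gi *: y.
Proof.
move=> xy0; apply/eqP; rewrite -subr_eq0; apply/eqP/double_inj => /=.
have : (1 - gi) *: ((m x y : qgroup) *+ 2) = 0 by rewrite xy0 mul0rn scaler0.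
rewrite mulq_affine scalerDr !scalerA (_ : (1 - gi) * (1 + gi) = 2%:R); last by ring: sqr_gi.
rewrite (_ : (1 - gi) * (1 - gi) = - (2%:R * gi)); last by ring: sqr_gi.
by rewrite mul0rn mulrnBl -!scaler_nat scalerA scaleNr.
Qed.

Lemma mulq_scale (u v w : gaussint) (x : qgroup) :
  (1 + gi) * u + (1 - gi) * v = 2%:R * w -> m (u *: x) (v *: x) = w *: x.
Proof.
move=> uvw; apply: double_inj; rewrite /= mulq_affine !scalerA -scalerDl uvw.
by rewrite -scalerA scaler_nat.
Qed.

Definition col_unit (k : nat) : gaussint :=
  match k with 1 => 1 | 2 => gi | 3 => - gi | _ => -1 end.

Section Generator.
Variables a b : qgroup.
Hypothesis o_aba : o = aba m a b.

Lemma b_opp : b = - a.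
Proof.
have ba : m b a = gi *: b by apply: mulq_eq0; rewrite -mulq_flex_sym; exact: esym o_aba.
have : a = gi *: (m b a : qgroup) by apply: mulq_eq0; rewrite -mulq_flex; exact: esym o_aba.
by rewrite ba scalerA -expr2 sqr_gi scaleN1r => ->; rewrite opprK.
Qed.

Lemma Hrow_scaled n : Hrow m a b n =
  ((col_unit 1 * π ^+ n) *: a, (col_unit 2 * π ^+ n) *: a,
   (col_unit 3 * π ^+ n) *: a, (col_unit 4 * π ^+ n) *: a).
Proof.
elim: n => [|n IHn] /=.
  have ab : m a (- a) = gi *: a.
    by rewrite -[a in m a _]scale1r -scaleN1r (mulq_scale (w := gi)) //; ring.
  have ba : m (- a) a = - gi *: a.
    by rewrite -[a in m _ a]scale1r -scaleN1r (mulq_scale (w := - gi)) //; ring.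
  by rewrite b_opp ab ba !expr0 !mulr1 scale1r scaleN1r.
by rewrite IHn /= !exprS; congr (_, _, _, _); apply: mulq_scale; ring: sqr_gi.
Qed.

Lemma elt_scaled t k : elt m a b t k = (col_unit k * π ^+ (t - 1)) *: a.
Proof. by rewrite /elt Hrow_scaled; case: k => [|[|[|[|k]]]]. Qed.

Lemma col_unit_exp k : exists j, col_unit k = gi ^+ j.
Proof.
by case: k => [|[|[|[|k]]]]; [exists 2 | exists 0 | exists 1 | exists 3 | exists 2];
  rewrite /=; ring: sqr_gi.
Qed.

Lemma exp_col_unit j : exists2 k, (0 < k <= 4)%N & gi ^+ j = col_unit k.
Proof. by case: (unit_cases sqr_gi j) => ->; [exists 1 | exists 2 | exists 4 | exists 3]. Qed.

Lemma no_partition_into_six_rows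
    (cover : forall x : T, x = o \/ exists t, (0 < t <= 6)%N /\ inH m a b t x)
    (disjoint : forall t1 t2, (0 < t1 <= 6)%N -> (0 < t2 <= 6)%N -> t1 != t2 ->
       forall x, ~ (inH m a b t1 x /\ inH m a b t2 x)) :
  False.
Proof.
apply: (six_layers_contradiction sqr_gi double_inj (a := a)) => [x | j e e_5 pi_e].
  case: (cover x) => [-> | [t [t_6 [k [_ ->]]]]]; [by left | right].
  have [j col_k] := col_unit_exp k.
  by exists j, (t - 1)%N; rewrite elt_scaled col_k; split => //; lia.
have [k k_4 gi_j] := exp_col_unit j.
apply: (disjoint 1 e.+1 _ _ _ (π ^+ e *: a)); try lia; split.
  by exists k; split; [lia | rewrite elt_scaled expr0 mulr1 pi_e gi_j].
by exists 1; split; [lia | rewrite elt_scaled subn1 /= mul1r].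
Qed.

End Generator.
End AffineGroup.
End QuadraticalQuasigroup.

Import Corelib.Init.Peano.

Theorem theorem7p1 :
  forall (T : Type) (mul : T -> T -> T),
    is_quadratical_quasigroup mul ->
    forall a b : T, a <> b ->
    ~ ( (forall x : T, x = aba mul a b \/ exists t, 1 <= t <= 6 /\ inH mul a b t x)
        /\ (forall i j : nat, 1 <= i <= 6 -> 1 <= j <= 6 -> i <> j ->
              forall x : T, ~ (inH mul a b i x /\ inH mul a b j x)) ).
Proof.
move=> T mul [[ldiv rdiv] quad] a b _ [cover disjoint].
apply: (no_partition_into_six_rows ldiv rdiv quad (erefl (aba mul a b))).
  by move=> x; case: (cover x) => [|[t [t_6 tx]]]; [left | right; exists t; split => //; lia].
by move=> t1 t2 t1_6 t2_6 /eqP t12 x; apply: disjoint => //; lia.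
Qed.
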